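(* For every integer $n\ge3$, the coefficient of the monomial $T_2T_n^2$ in $R_{n+1}$ is $c^{(n+1)}_{n,n,2}=-n(n+1)$.
   Context: Let $T_1,T_2,\dots$ be indeterminates, $T_\alpha=T_{\alpha_1}\cdots T_{\alpha_d}$. Define linear operators $L,H$ on monomials (constants sent to $0$): $L(T_{\alpha_1}\cdots T_{\alpha_r})=\sum_{1\le i<j\le r}T_{\alpha_1}\cdots T_{\alpha_i+1}\cdots T_{\alpha_j+1}\cdots T_{\alpha_r}$, $H(T_{\alpha_1}\cdots T_{\alpha_r})=-\frac12\sum_{k=1}^{r}\sum_{l=1}^{\alpha_k-1}\binom{\alpha_k}{l}T_{1+l}T_{1+\alpha_k-l}\prod_{i\ne k}T_{\alpha_i}$. For $n\ge2$ let $A_n=-\sum_{k=1}^{n-1}\binom{n}{k}T_{1+k}T_{1+n-k}T_n$; set $R_2=0$, $R_{n+1}=A_n+L(R_n)+H(R_n)$. $c^{(n)}_\alpha$ is the coefficient of the monomial $T_\alpha$ in $R_n$. *)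

(* Polynomials in the indeterminates T_1, T_2, ... with
   rational coefficients are represented as formal finite sums: a list of
   (coefficient, monomial) pairs, a monomial T_{a_1}...T_{a_r} being the
   sequence [:: a_1; ...; a_r]. Two monomials are equal iff their index
   sequences are permutations of each other; the coefficient of T_alpha in P
   is the sum of the coefficients of all terms whose monomial equals T_alpha. *)
From mathcomp Require Import all_boot all_order all_algebra.
Set Implicit Arguments. Unset Strict Implicit. Unset Printing Implicit Defensive.
Import Order.TTheory GRing.Theory Num.Theory.
Local Open Scope ring_scope.

Definition mono := seq nat.
Definition fpoly := seq (rat * mono).

Definition coef (P : fpoly) (alpha : mono) : rat :=
  \sum_(t <- P | perm_eq t.2 alpha) t.1.

Definition linext (f : mono -> fpoly) (P : fpoly) : fpoly :=
  flatten [seq [seq (t.1 * u.1, u.2) | u <- f t.2] | t <- P].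

Definition incr_at (m : mono) (i : nat) : mono := set_nth 0%N m i (nth 0%N m i).+1.

(* L on a monomial: sum over 1 <= i < j <= r (0-based i < j < r) *)
Definition L_mono (m : mono) : fpoly :=
  flatten [seq [seq (1, incr_at (incr_at m i) j) | j <- iota i.+1 (size m - i.+1)]
          | i <- iota 0 (size m)].

Definition H_mono (m : mono) : fpoly :=
  flatten [seq [seq (- (1/2) * ('C(nth 0%N m k, l))%:R,
                     (1 + l)%N :: (1 + nth 0%N m k - l)%N :: (take k m ++ drop k.+1 m))
               | l <- iota 1 (nth 0%N m k).-1]
          | k <- iota 0 (size m)].

Definition Lop := linext L_mono.
Definition Hop := linext H_mono.

Definition A (n : nat) : fpoly :=
  [seq (- ('C(n, k))%:R, [:: (1 + k)%N; (1 + n - k)%N; n]) | k <- iota 1 n.-1].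

(* R_2 = 0, R_{n+1} = A_n + L(R_n) + H(R_n); R_0, R_1 are unused (set to 0) *)
Fixpoint R (n : nat) : fpoly :=
  match n with
  | m.+1 => if (2 <= m)%N then A m ++ Lop (R m) ++ Hop (R m) else [::]
  | 0 => [::]
  end.

(* Write c_n for the coefficient of T_2 T_n^2 in R_(n+1).  All monomials of
   R_k have degree at least 3 and indices at least 2, so H (which raises the
   degree) cannot reach a cubic monomial, and L, which raises two of the three
   indices of a cubic monomial by one, can only produce T_2 T_(n+1)^2 from
   T_2 T_n^2, with multiplicity one as soon as n >= 3.  Adding the two terms
   k = 1 and k = n of A_(n+1) gives c_(n+1) = c_n - 2(n+1), and c_3 = -12. *)
From mathcomp Require Import all_boot all_order all_algebra zify.
Set Implicit Arguments. Unset Strict Implicit. Unset Printing Implicit Defensive.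
Import Order.TTheory GRing.Theory Num.Theory.
Local Open Scope ring_scope.

Lemma coef_cat P Q a : coef (P ++ Q) a = coef P a + coef Q a.
Proof. by rewrite /coef big_cat. Qed.

Lemma coefE P a : coef P a = \sum_(t <- P) t.1 * (perm_eq t.2 a)%:R.
Proof.
by rewrite /coef big_mkcond; apply: eq_bigr => t _; case: perm_eq; rewrite ?mulr1 ?mulr0.
Qed.

Lemma coef_linext f P a :
  coef (linext f P) a = \sum_(t <- P) t.1 * coef (f t.2) a.
Proof.
rewrite /coef /linext big_flatten /= big_map; apply: eq_bigr => t _.
by rewrite big_map mulr_sumr.
Qed.

Lemma coef_eq0_size P a : {in P, forall t, size t.2 != size a} -> coef P a = 0.
Proof.
move=> Psize; rewrite /coef big1_seq // => t /andP[ta tP].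
by have := Psize t tP; rewrite (perm_size ta) eqxx.
Qed.

Lemma mem_linext f P t : t \in linext f P ->
  exists2 s, s \in P & exists2 u, u \in f s.2 & t.2 = u.2.
Proof. by case/flattenP=> _ /mapP[s sP ->] /mapP[u uf ->]; exists s => //; exists u. Qed.

Lemma size_incr_at m i : (i < size m)%N -> size (incr_at m i) = size m.
Proof. by move=> lt_i; rewrite /incr_at size_set_nth; lia. Qed.

Lemma all_leq_incr_at k m i :
  (i < size m)%N -> all (leq k) m -> all (leq k) (incr_at m i).
Proof.
move=> lt_i /(all_nthP 0%N) mk; apply/(all_nthP 0%N) => j.
rewrite size_incr_at // nth_set_nth /= => lt_j.
by case: eqP => _; [apply: leqW; apply: mk | apply: mk].
Qed.

Lemma mem_L_mono m u : u \in L_mono m ->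
  exists i j, [/\ (i < j < size m)%N & u.2 = incr_at (incr_at m i) j].
Proof.
case/flattenP=> _ /mapP[i _ ->] /mapP[j]; rewrite mem_iota => /andP[ij jm] ->.
by exists i, j; split=> //; apply/andP; split; lia.
Qed.

Lemma L_mono_size m u : u \in L_mono m -> size u.2 = size m.
Proof.
case/mem_L_mono=> i [j [/andP[ij jm] ->]].
by rewrite !size_incr_at //; lia.
Qed.

Lemma L_mono_all_leq k m u : all (leq k) m -> u \in L_mono m -> all (leq k) u.2.
Proof.
move=> mk /mem_L_mono[i [j [/andP[ij jm] ->]]]; have im : (i < size m)%N by lia.
by apply: all_leq_incr_at; [rewrite size_incr_at | apply: all_leq_incr_at].
Qed.

Lemma mem_H_mono m u : u \in H_mono m -> exists k l,
  [/\ (k < size m)%N, (1 <= l < nth 0%N m k)%N &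
      u.2 = (1 + l)%N :: (1 + nth 0%N m k - l)%N :: (take k m ++ drop k.+1 m)].
Proof.
case/flattenP=> _ /mapP[k km ->] /mapP[l lm ->].
move: km lm; rewrite !mem_iota => km lm; exists k, l; split=> //; lia.
Qed.

Lemma H_mono_size m u : u \in H_mono m -> size u.2 = (size m).+1.
Proof.
by case/mem_H_mono=> k [l [km _ ->]]; rewrite /= size_cat size_take size_drop km; lia.
Qed.

Lemma H_mono_all_leq2 m u : all (leq 2) m -> u \in H_mono m -> all (leq 2) u.2.
Proof.
move=> m2 /mem_H_mono[k [l [km lm ->]]] /=.
rewrite all_cat; apply/and4P; split; [lia | lia | |].
- by apply/allP=> x /mem_take /(allP m2).
- by apply/allP=> x /mem_drop /(allP m2).
Qed.

Definition admissible (m : mono) := (3 <= size m)%N && all (leq 2) m.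

Lemma R_succ n : (2 <= n)%N -> R n.+1 = A n ++ Lop (R n) ++ Hop (R n).
Proof. by move=> n_ge2; rewrite /= n_ge2. Qed.

Lemma R_admissible k t : t \in R k -> admissible t.2.
Proof.
elim: k t => [|k IHk] t //; rewrite /=; case: ifP => // _.
rewrite !mem_cat => /or3P[tA | tL | tH].
- by case/mapP: tA => i; rewrite mem_iota => i_n ->; rewrite /admissible /=; lia.
- case/mem_linext: tL => s /IHk/andP[s3 s2] [u su ->].
  by rewrite /admissible (L_mono_size su) s3 (L_mono_all_leq s2 su).
- case/mem_linext: tH => s /IHk/andP[s3 s2] [u su ->].
  by rewrite /admissible (H_mono_size su) (H_mono_all_leq2 s2 su) andbT; lia.
Qed.

Lemma perm_eq_nn2 (x y z n : nat) : (3 <= n)%N ->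
  perm_eq [:: x; y; z] [:: n; n; 2%N] =
  [|| [&& x == n, y == n & z == 2%N], [&& x == n, y == 2%N & z == n]
    | [&& x == 2%N, y == n & z == n]].
Proof.
move=> n_ge3; have n_neq2 : (n == 2%N) = false by lia.
have two_neq_n : (2 == n)%N = false by lia.
apply/idP/idP; last first.
  by case/or3P=> /and3P[/eqP-> /eqP-> /eqP->]; rewrite /perm_eq /= eqxx ?n_neq2 ?two_neq_n.
move=> xyz_nn2; have cnt w := permP xyz_nn2 (pred1 w).
have /= := cnt n; have /= := cnt 2%N; rewrite eqxx n_neq2 two_neq_n.
by do ! case: eqP => //= ?; subst.
Qed.

Lemma coef_L_mono_nn2 m n : (3 <= n)%N -> all (leq 2) m ->
  coef (L_mono m) [:: n.+1; n.+1; 2%N] = (perm_eq m [:: n; n; 2%N])%:R.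
Proof.
move=> n_ge3 m2; have [m3|m_neq3] := eqVneq (size m) 3%N; last first.
  rewrite coef_eq0_size => [|u /L_mono_size ->//].
  by have /negbTE -> : ~~ perm_eq m [:: n; n; 2%N] by apply: contra m_neq3 => /perm_size ->.
case: m m2 m3 => [|a [|b [|c []]]] //= /and4P[a2 b2 c2 _] _.
rewrite coefE /L_mono /incr_at /= !big_cons big_nil !mul1r addr0 -!natrD.
have n1_ge3 : (3 <= n.+1)%N by lia.
rewrite !perm_eq_nn2 //; apply: congr1; rewrite !eqSS.
have [a_neq1 b_neq1 c_neq1] : [/\ a != 1, b != 1 & c != 1]%N by split; lia.
rewrite (negbTE a_neq1) (negbTE b_neq1) (negbTE c_neq1) /= !andbF /=.
by do ! case: eqP => //= ?; subst; try lia.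
Qed.

Lemma coef_Lop_nn2 P n : (3 <= n)%N -> {in P, forall t, all (leq 2) t.2} ->
  coef (Lop P) [:: n.+1; n.+1; 2%N] = coef P [:: n; n; 2%N].
Proof.
move=> n_ge3 P2; rewrite coef_linext coefE; apply: eq_big_seq => t tP.
by rewrite coef_L_mono_nn2 // P2.
Qed.

Lemma coef_Hop_eq0 P a : {in P, forall t, size a <= size t.2}%N ->
  coef (Hop P) a = 0.
Proof.
move=> Psize; rewrite coef_linext big1_seq // => t /andP[_ tP].
rewrite coef_eq0_size ?mulr0 // => u /H_mono_size ->.
by rewrite eq_sym neq_ltn ltnS Psize.
Qed.

Lemma coef_A_nn2 n : (3 <= n)%N -> coef (A n) [:: n; n; 2%N] = - (2 * n)%:R.
Proof.
rewrite coefE /A big_map -subn1 -/(index_iota 1 n).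
case: n => [|[|[|k]]] // _.
rewrite big_ltn // big_nat_recr //= big_nat big1 => [|j].
  have -> : (1 + k.+3 - k.+2 = 2)%N by lia.
  rewrite !perm_eq_nn2 // !eqxx /= bin1 binSn mulr1 add0r.
  by rewrite -opprD -natrD mul2n addnn.
move=> j_mid; rewrite (_ : perm_eq _ _ = false) ?mulr0 //.
by rewrite perm_eq_nn2 //; lia.
Qed.

Lemma coef_R_nn2_succ n : (3 <= n)%N ->
  coef (R n.+2) [:: n.+1; n.+1; 2%N] =
  coef (R n.+1) [:: n; n; 2%N] - (2 * n.+1)%:R.
Proof.
move=> n_ge3; rewrite R_succ //; last by lia.
rewrite !coef_cat coef_A_nn2 //; last by lia.
rewrite coef_Lop_nn2 // => [|t /R_admissible/andP[] //].
rewrite coef_Hop_eq0 => [|t /R_admissible/andP[] //].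
by rewrite addr0 addrC.
Qed.

Lemma coef_R4_332 : coef (R 4) [:: 3%N; 3%N; 2%N] = - 12%:R.
Proof. by apply/eqP; rewrite /coef unlock; vm_compute. Qed.

Theorem mainTheorem13 (n : nat) : (3 <= n)%N ->
  coef (R n.+1) [:: n; n; 2%N] = - ((n * (n + 1))%N)%:R.
Proof.
elim: n => [|n IHn] // n_ge2; have [->|n_ge3] : n = 2%N \/ (3 <= n)%N by lia.
  exact: coef_R4_332.
rewrite coef_R_nn2_succ // IHn // -opprD -natrD.
by congr (- _%:R); lia.
Qed.
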